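(* Let $\lambda>0$ and $\mu=\nu>0$, and equip $\Sigma^3$ with the generalised Riemannian Berger metric $g$ described in the context. For $\theta>0$ let $U^2_\theta\subset\Sigma^3$ be the torus $\{(\cosh\theta\, e^{i\alpha},\sinh\theta\, e^{i\beta}):\alpha,\beta\in\mathbb R\}$, and let $H_g$ be its mean curvature vector in $(\Sigma^3,g)$. Then for every real number $C>\frac1\mu$ there exists $\theta>0$ such that the mean curvature of $U^2_\theta$ is constant and satisfies $\|H_g\|\equiv C$.
   Context: $\Sigma^3=\{(z,w)\in\mathbb C^2: |z|^2-|w|^2=1\}$ is a Lie group with multiplication $(z_1,w_1)\cdot(z_2,w_2)=(z_1z_2+\bar w_1w_2,\ w_1z_2+\bar z_1w_2)$ and inverse $(z,w)^{-1}=(\bar z,-w)$; the same formula defines $p\cdot v$ for $v\in\mathbb C^2$. Let $\langle (z_1,w_1),(z_2,w_2)\rangle=\mathrm{Re}(\bar z_1z_2+\bar w_1w_2)$. For $\lambda,\mu,\nu>0$ the left-invariant Riemannian metric is $g_p(A,B)=\lambda^2\langle p^{-1}A,(i,0)\rangle\langle p^{-1}B,(i,0)\rangle+\mu^2\langle p^{-1}A,(0,-1)\rangle\langle p^{-1}B,(0,-1)\rangle+\nu^2\langle p^{-1}A,(0,i)\rangle\langle p^{-1}B,(0,i)\rangle+\langle p^{-1}A,(1,0)\rangle\langle p^{-1}B,(1,0)\rangle$ for $A,B\in T_p\Sigma^3$. For a surface in $(\Sigma^3,g)$ with $g$-orthonormal tangent basis $V_1,V_2$, the mean curvature vector is $H_g=\tfrac12(B(V_1,V_1)+B(V_2,V_2))$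 with $B$ the second fundamental form, and $\|H_g\|=\sqrt{g(H_g,H_g)}$. *)

From Stdlib Require Import Reals.
From Coquelicot Require Import Coquelicot.
Open Scope R_scope.

(* A complex number is a pair (Re, Im). *)
Definition cpx := (R * R)%type.
Definition cadd (a b : cpx) : cpx := (fst a + fst b, snd a + snd b).
Definition cmul (a b : cpx) : cpx :=
  (fst a * fst b - snd a * snd b, fst a * snd b + snd a * fst b).
Definition cconj (a : cpx) : cpx := (fst a, - snd a).
Definition copp (a : cpx) : cpx := (- fst a, - snd a).

Definition C2 := (cpx * cpx)%type.

(* (z1,w1).(z2,w2) = (z1 z2 + conj(w1) w2, w1 z2 + conj(z1) w2);
   the same formula defines p . v for v in C^2. *)
Definition gmul (p v : C2) : C2 :=
  (cadd (cmul (fst p) (fst v)) (cmul (cconj (snd p)) (snd v)),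
   cadd (cmul (snd p) (fst v)) (cmul (cconj (fst p)) (snd v))).
Definition ginv (p : C2) : C2 := (cconj (fst p), copp (snd p)).

Definition pair (a b : C2) : R :=
  fst (cadd (cmul (cconj (fst a)) (fst b)) (cmul (cconj (snd a)) (snd b))).

Definition e_i : C2 := ((0, 1), (0, 0)).
Definition e_m1 : C2 := ((0, 0), (-1, 0)).
Definition e_wi : C2 := ((0, 0), (0, 1)).
Definition e_1 : C2 := ((1, 0), (0, 0)).

Definition gmetric (lam mu nu : R) (p A B : C2) : R :=
  let a := gmul (ginv p) A in
  let b := gmul (ginv p) B in
  lam ^ 2 * pair a e_i * pair b e_i
  + mu ^ 2 * pair a e_m1 * pair b e_m1
  + nu ^ 2 * pair a e_wi * pair b e_wi
  + pair a e_1 * pair b e_1.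

Definition vec := nat -> R.
Definition upd (u : vec) (i : nat) (s : R) : vec :=
  fun k => if Nat.eqb k i then s else u k.
Definition pd (h : vec -> R) (i : nat) (u : vec) : R :=
  Derive (fun s => h (upd u i s)) (u i).

Definition sum2 (f : nat -> R) : R := f 0%nat + f 1%nat.
Definition sum3 (f : nat -> R) : R := f 0%nat + f 1%nat + f 2%nat.

(* ---------- the global chart (covering map) R^3 -> Sigma^3 ----------
   F(t,x,y) = (sqrt(1+x^2+y^2) e^{it}, x + i y); indeed |z|^2-|w|^2 = 1,
   and F is a local diffeomorphism (universal covering) onto Sigma^3. *)
Definition Fchart (u : vec) : C2 :=
  let r := sqrt (1 + u 1%nat ^ 2 + u 2%nat ^ 2) in
  ((r * cos (u 0%nat), r * sin (u 0%nat)), (u 1%nat, u 2%nat)).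

Definition Fcomp (k : nat) (u : vec) : R :=
  match k with
  | 0%nat => fst (fst (Fchart u))
  | 1%nat => snd (fst (Fchart u))
  | 2%nat => fst (snd (Fchart u))
  | _ => snd (snd (Fchart u))
  end.

Definition dF (i : nat) (u : vec) : C2 :=
  ((pd (Fcomp 0) i u, pd (Fcomp 1) i u), (pd (Fcomp 2) i u, pd (Fcomp 3) i u)).

Definition Gm (lam mu nu : R) (i j : nat) (u : vec) : R :=
  gmetric lam mu nu (Fchart u) (dF i u) (dF j u).

Definition m3 (i : nat) : nat := Nat.modulo i 3.
Definition det3 (M : nat -> nat -> R) : R :=
  sum3 (fun j => M 0%nat j *
     (M 1%nat (m3 (j+1)) * M 2%nat (m3 (j+2)) - M 1%nat (m3 (j+2)) * M 2%nat (m3 (j+1)))).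
Definition inv3 (M : nat -> nat -> R) (i j : nat) : R :=
  (M (m3 (j+1)) (m3 (i+1)) * M (m3 (j+2)) (m3 (i+2))
   - M (m3 (j+1)) (m3 (i+2)) * M (m3 (j+2)) (m3 (i+1))) / det3 M.
Definition inv2 (M : nat -> nat -> R) (i j : nat) : R :=
  let d := M 0%nat 0%nat * M 1%nat 1%nat - M 0%nat 1%nat * M 1%nat 0%nat in
  match i, j with
  | 0%nat, 0%nat => M 1%nat 1%nat / d
  | 1%nat, 1%nat => M 0%nat 0%nat / d
  | 0%nat, 1%nat => - M 0%nat 1%nat / d
  | _, _ => - M 1%nat 0%nat / d
  end.

Definition Gam (lam mu nu : R) (k i j : nat) (u : vec) : R :=
  / 2 * sum3 (fun l => inv3 (fun a b => Gm lam mu nu a b u) k l *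
     (pd (Gm lam mu nu j l) i u + pd (Gm lam mu nu i l) j u - pd (Gm lam mu nu i j) l u)).

Definition gdot (lam mu nu : R) (u : vec) (X Y : vec) : R :=
  sum3 (fun i => sum3 (fun j => Gm lam mu nu i j u * X i * Y j)).

Section Surface.
Variables (lam mu nu : R) (f : vec -> vec).

Definition df (a : nat) (s : vec) : vec := fun k => pd (fun s' => f s' k) a s.
Definition hI (a b : nat) (s : vec) : R := gdot lam mu nu (f s) (df a s) (df b s).
Definition Dab (a b : nat) (s : vec) : vec := fun k =>
  pd (fun s' => df b s' k) a s
  + sum3 (fun i => sum3 (fun j => Gam lam mu nu k i j (f s) * df a s i * df b s j)).
Definition perp (s : vec) (V : vec) : vec := fun k =>
  V k - sum2 (fun a => sum2 (fun b =>
          inv2 (fun c d => hI c d s) a b * gdot lam mu nu (f s) V (df a s) * df b s k)).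
Definition Bsf (a b : nat) (s : vec) : vec := perp s (Dab a b s).
Definition Hvec (s : vec) : vec := fun k =>
  / 2 * sum2 (fun a => sum2 (fun b => inv2 (fun c d => hI c d s) a b * Bsf a b s k)).
Definition normH (s : vec) : R := sqrt (gdot lam mu nu (f s) (Hvec s) (Hvec s)).
End Surface.

(* ---------- the torus U_theta ----------
   (cosh th e^{i al}, sinh th e^{i be}) = Fchart (al, sinh th cos be, sinh th sin be),
   since sqrt(1 + sinh^2 th) = cosh th. *)
Definition torus (th : R) (s : vec) : vec := fun k =>
  match k with
  | 0%nat => s 0%nat
  | 1%nat => sinh th * cos (s 1%nat)
  | 2%nat => sinh th * sin (s 1%nat)
  | _ => 0
  end.

Definition pt2 (al be : R) : vec := fun k =>
  match k with 0%nat => al | _ => be end.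

From Stdlib Require Import Reals Nsatz Lra Lia.
From Coquelicot Require Import Coquelicot.
Open Scope R_scope.

(* In the chart F(t,x,y) = (sqrt(1+x^2+y^2) e^{it}, x+iy), left translation by F(u)^-1
   sends the coordinate fields to explicit elements of the Lie algebra, so for mu = nu
   the metric coefficients are rational functions of (x,y) alone.  The torus U_th is the
   image of (al,be) |-> (al, sinh th cos be, sinh th sin be); its tangent plane is spanned
   by d/dt and the rotation field (0,-y,x), and the radial field N = (0,x,y) is
   g-orthogonal to both.  Hence B(V,W) = g(D_V W, N)/g(N,N) N, and computing the
   Christoffel symbols of the first kind gives H = -(1 + 2 sinh^2 th)/(2 mu^2 sinh^2 th) N,
   so |H| = coth(2 th)/mu, which takes every value above 1/mu. *)

Lemma sum3_ext (f g : nat -> R) : (forall i, (i < 3)%nat -> f i = g i) -> sum3 f = sum3 g.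
Proof. intros H; unfold sum3; rewrite !H by lia; reflexivity. Qed.

Lemma Gm_sym lam mu nu a b u : Gm lam mu nu a b u = Gm lam mu nu b a u.
Proof. unfold Gm, gmetric; ring. Qed.

Lemma gdot_ext lam mu nu u (V V' W W' : vec) :
  (forall k, (k < 3)%nat -> V k = V' k) -> (forall k, (k < 3)%nat -> W k = W' k) ->
  gdot lam mu nu u V W = gdot lam mu nu u V' W'.
Proof.
  intros HV HW; unfold gdot.
  apply sum3_ext; intros i Hi; apply sum3_ext; intros j Hj; rewrite HV, HW by assumption.
  reflexivity.
Qed.

Lemma gdot_sym lam mu nu u (V W : vec) : gdot lam mu nu u V W = gdot lam mu nu u W V.
Proof.
  unfold gdot, sum3.
  rewrite !(Gm_sym lam mu nu 1%nat 0%nat), !(Gm_sym lam mu nu 2%nat 0%nat),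
    !(Gm_sym lam mu nu 2%nat 1%nat).
  ring.
Qed.

Lemma gdot_lin lam mu nu u (V W : vec) c0 c1 c2 (V0 V1 V2 : vec) :
  (forall k, (k < 3)%nat -> V k = c0 * V0 k + c1 * V1 k + c2 * V2 k) ->
  gdot lam mu nu u V W =
  c0 * gdot lam mu nu u V0 W + c1 * gdot lam mu nu u V1 W + c2 * gdot lam mu nu u V2 W.
Proof. intros HV; unfold gdot, sum3; rewrite !HV by lia; ring. Qed.

Lemma gdot_scal lam mu nu u (a b : R) (V W : vec) :
  gdot lam mu nu u (fun k => a * V k) (fun k => b * W k) = a * b * gdot lam mu nu u V W.
Proof. unfold gdot, sum3; ring. Qed.

Lemma sum3_mul_inv3K (M : nat -> nat -> R) (E : nat -> R) m :
  det3 M <> 0 -> (forall a b, M a b = M b a) -> (m < 3)%nat ->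
  sum3 (fun k => M k m * sum3 (fun l => inv3 M k l * E l)) = E m.
Proof.
  intros Hd Hs Hm.
  pose proof (Hs 0%nat 1%nat) as H01; pose proof (Hs 0%nat 2%nat) as H02;
  pose proof (Hs 1%nat 2%nat) as H12.
  unfold inv3, det3, sum3, m3 in *; simpl in *.
  destruct m as [|[|[|m]]]; try lia; simpl; rewrite ?H01, ?H02, ?H12 in *; field; assumption.
Qed.

Definition Gam_first (lam mu nu : R) (i j m : nat) (u : vec) : R :=
  / 2 * (pd (Gm lam mu nu j m) i u + pd (Gm lam mu nu i m) j u - pd (Gm lam mu nu i j) m u).

Lemma Gam_lower lam mu nu u i j m :
  det3 (fun a b => Gm lam mu nu a b u) <> 0 -> (m < 3)%nat ->
  sum3 (fun k => Gm lam mu nu k m u * Gam lam mu nu k i j u) = Gam_first lam mu nu i j m u.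
Proof.
  intros Hd Hm; unfold Gam, Gam_first.
  rewrite <- (sum3_mul_inv3K (fun a b => Gm lam mu nu a b u)
    (fun l => pd (Gm lam mu nu j l) i u + pd (Gm lam mu nu i l) j u - pd (Gm lam mu nu i j) l u) m)
    by first [exact Hd | exact Hm | intros; apply Gm_sym].
  unfold sum3; ring.
Qed.

Lemma gdot_Dab lam mu nu (f : vec -> vec) a b s (N : vec) :
  det3 (fun i j => Gm lam mu nu i j (f s)) <> 0 ->
  gdot lam mu nu (f s) (Dab lam mu nu f a b s) N =
  gdot lam mu nu (f s) (fun k => pd (fun s' => df f b s' k) a s) N
  + sum3 (fun m => N m * sum3 (fun i => sum3 (fun j =>
      Gam_first lam mu nu i j m (f s) * df f a s i * df f b s j))).
Proof.
  intros Hd.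
  transitivity (gdot lam mu nu (f s) (fun k => pd (fun s' => df f b s' k) a s) N
    + sum3 (fun m => N m * sum3 (fun i => sum3 (fun j =>
        sum3 (fun k => Gm lam mu nu k m (f s) * Gam lam mu nu k i j (f s))
        * df f a s i * df f b s j)))).
  - unfold gdot, Dab, sum3; ring.
  - f_equal; apply sum3_ext; intros m Hm; f_equal.
    apply sum3_ext; intros i _; apply sum3_ext; intros j _.
    rewrite Gam_lower by assumption; reflexivity.
Qed.

Section NormalProjection.
Variables (lam mu nu : R) (f : vec -> vec) (s : vec) (N : vec).
Let g := gdot lam mu nu (f s).
Hypothesis det_hI : hI lam mu nu f 0 0 s * hI lam mu nu f 1 1 s
                    - hI lam mu nu f 0 1 s * hI lam mu nu f 1 0 s <> 0.
Hypothesis normal_orth : forall a, g (df f a s) N = 0.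
Hypothesis normal_nondeg : g N N <> 0.

Lemma perp_decomp (V : vec) c0 c1 beta k :
  (forall k, (k < 3)%nat -> V k = c0 * df f 0 s k + c1 * df f 1 s k + beta * N k) ->
  (k < 3)%nat ->
  perp lam mu nu f s V k = g V N / g N N * N k.
Proof.
  intros HV Hk.
  assert (HgV : forall W, g V W = c0 * g (df f 0 s) W + c1 * g (df f 1 s) W + beta * g N W)
    by (intros W; apply gdot_lin; exact HV).
  assert (H10 : hI lam mu nu f 1 0 s = hI lam mu nu f 0 1 s) by apply gdot_sym.
  pose proof (normal_orth 0) as H0; pose proof (normal_orth 1) as H1.
  unfold g in *; rewrite gdot_sym in H0, H1.
  unfold perp, sum2, inv2; cbv beta iota zeta; rewrite !HgV, HV by exact Hk.
  unfold hI in *; rewrite H10 in *; rewrite H0, H1, !normal_orth.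
  field; split; assumption.
Qed.

End NormalProjection.

Lemma one_add_sqr2_gt0 x y : 0 < 1 + x ^ 2 + y ^ 2.
Proof. nra. Qed.

Definition chart_radius (u : vec) : R := sqrt (1 + u 1%nat ^ 2 + u 2%nat ^ 2).

Lemma chart_radius_neq0 u : chart_radius u <> 0.
Proof. apply Rgt_not_eq, sqrt_lt_R0, one_add_sqr2_gt0. Qed.

Lemma chart_radius_sqr u : chart_radius u ^ 2 = 1 + u 1%nat ^ 2 + u 2%nat ^ 2.
Proof. apply pow2_sqrt; left; apply one_add_sqr2_gt0. Qed.

Lemma dF_chart i u : (i < 3)%nat -> dF i u =
  let r := chart_radius u in let c := cos (u 0%nat) in let s := sin (u 0%nat) in
  match i with
  | 0%nat => ((- r * s, r * c), (0, 0))
  | 1%nat => ((u 1%nat / r * c, u 1%nat / r * s), (1, 0))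
  | _ => ((u 2%nat / r * c, u 2%nat / r * s), (0, 1))
  end.
Proof.
  intros Hi; pose proof (chart_radius_neq0 u) as Hr.
  unfold dF, pd, Fcomp, Fchart, upd.
  destruct i as [|[|[|i]]]; try lia; simpl;
  repeat f_equal; apply is_derive_unique; auto_derive;
  try (repeat split; apply one_add_sqr2_gt0); unfold chart_radius in *; simpl in *; field; exact Hr.
Qed.

Definition cdot (a b : cpx) : R := fst a * fst b + snd a * snd b.

Lemma cdot_cmul (e a b : cpx) : cdot (cmul e a) (cmul e b) = cdot e e * cdot a b.
Proof. unfold cdot, cmul; simpl; ring. Qed.

Lemma gmetric_left_trivialized lam mu p A B :
  gmetric lam mu mu p A B =
  let a := gmul (ginv p) A in let b := gmul (ginv p) B in
  lam ^ 2 * snd (fst a) * snd (fst b) + mu ^ 2 * cdot (snd a) (snd b)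
  + fst (fst a) * fst (fst b).
Proof. unfold gmetric, pair, cdot, e_i, e_m1, e_wi, e_1, cadd, cmul, cconj; simpl; ring. Qed.

Definition chart_vert (x y : R) (i : nat) : R :=
  match i with 0%nat => 1 + x ^ 2 + y ^ 2 | 1%nat => y | _ => - x end.
Definition chart_horiz (x y : R) (i : nat) : cpx :=
  match i with
  | 0%nat => (y * (1 + x ^ 2 + y ^ 2), - x * (1 + x ^ 2 + y ^ 2))
  | 1%nat => (1 + y ^ 2, - x * y)
  | _ => (- x * y, 1 + x ^ 2)
  end.

Lemma chart_left_trivialized i u : (i < 3)%nat ->
  gmul (ginv (Fchart u)) (dF i u) =
  ((0, chart_vert (u 1%nat) (u 2%nat) i),
   cmul (cos (u 0%nat), sin (u 0%nat))
        (fst (chart_horiz (u 1%nat) (u 2%nat) i) / chart_radius u,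
         snd (chart_horiz (u 1%nat) (u 2%nat) i) / chart_radius u)).
Proof.
  intros Hi; rewrite dF_chart by exact Hi.
  pose proof (chart_radius_sqr u) as Hr2; pose proof (chart_radius_neq0 u) as Hr.
  pose proof (sin2_cos2 (u 0%nat)) as Hcs; unfold Rsqr in Hcs.
  unfold Fchart; change (sqrt (1 + u 1%nat ^ 2 + u 2%nat ^ 2)) with (chart_radius u).
  set (r := chart_radius u) in *; set (c := cos (u 0%nat)) in *; set (s := sin (u 0%nat)) in *;
  set (x := u 1%nat) in *; set (y := u 2%nat) in *; clearbody r c s x y.
  unfold gmul, ginv, cadd, cmul, cconj, copp, chart_vert, chart_horiz.
  destruct i as [|[|[|i]]]; try lia; simpl; f_equal; f_equal;
  unfold Rdiv; set (ir := / r);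
  assert (Hir : r * ir = 1) by (apply Rinv_r; exact Hr); clearbody ir; simpl in *; nsatz.
Qed.

Definition chart_metric (L M x y : R) (i j : nat) : R :=
  L * chart_vert x y i * chart_vert x y j
  + M * cdot (chart_horiz x y i) (chart_horiz x y j) / (1 + x ^ 2 + y ^ 2).

Lemma Gm_chart lam mu i j u : (i < 3)%nat -> (j < 3)%nat ->
  Gm lam mu mu i j u = chart_metric (lam ^ 2) (mu ^ 2) (u 1%nat) (u 2%nat) i j.
Proof.
  intros Hi Hj.
  unfold Gm; rewrite gmetric_left_trivialized, !chart_left_trivialized by assumption.
  cbv zeta; simpl fst; simpl snd; rewrite cdot_cmul.
  assert (Hcs : cdot (cos (u 0%nat), sin (u 0%nat)) (cos (u 0%nat), sin (u 0%nat)) = 1).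
  { unfold cdot; simpl; rewrite <- (sin2_cos2 (u 0%nat)); unfold Rsqr; ring. }
  unfold chart_metric; rewrite Hcs, <- chart_radius_sqr; pose proof (chart_radius_neq0 u) as Hr.
  unfold cdot; simpl; field; assumption.
Qed.

Lemma det3_Gm lam mu u : det3 (fun a b => Gm lam mu mu a b u) = lam ^ 2 * (mu ^ 2) ^ 2.
Proof.
  pose proof (one_add_sqr2_gt0 (u 1%nat) (u 2%nat)) as Hq.
  unfold det3, sum3, m3; simpl; rewrite !Gm_chart by lia.
  unfold chart_metric, chart_vert, chart_horiz, cdot; simpl; field; lra.
Qed.

Definition kron (k l : nat) : R := if Nat.eqb k l then 1 else 0.

Definition chart_vert_d (x y : R) (k i : nat) : R :=
  let dx := kron k 1 in let dy := kron k 2 in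
  match i with 0%nat => 2 * x * dx + 2 * y * dy | 1%nat => dy | _ => - dx end.
Definition chart_horiz_d (x y : R) (k i : nat) : cpx :=
  let dx := kron k 1 in let dy := kron k 2 in
  let q := 1 + x ^ 2 + y ^ 2 in let dq := 2 * x * dx + 2 * y * dy in
  match i with
  | 0%nat => (dy * q + y * dq, - dx * q - x * dq)
  | 1%nat => (2 * y * dy, - dx * y - x * dy)
  | _ => (- dx * y - x * dy, 2 * x * dx)
  end.

Definition chart_metric_d (L M x y : R) (k i j : nat) : R :=
  let q := 1 + x ^ 2 + y ^ 2 in let dq := 2 * x * kron k 1 + 2 * y * kron k 2 in
  L * (chart_vert_d x y k i * chart_vert x y j + chart_vert x y i * chart_vert_d x y k j)
  + M * (cdot (chart_horiz_d x y k i) (chart_horiz x y j)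
         + cdot (chart_horiz x y i) (chart_horiz_d x y k j)) / q
  - M * cdot (chart_horiz x y i) (chart_horiz x y j) * dq / q ^ 2.

Lemma pd_Gm lam mu i j k u : (i < 3)%nat -> (j < 3)%nat -> (k < 3)%nat ->
  pd (Gm lam mu mu i j) k u = chart_metric_d (lam ^ 2) (mu ^ 2) (u 1%nat) (u 2%nat) k i j.
Proof.
  intros Hi Hj Hk; unfold pd.
  rewrite (Derive_ext _
    (fun s => chart_metric (lam ^ 2) (mu ^ 2) (upd u k s 1%nat) (upd u k s 2%nat) i j))
    by (intros; apply Gm_chart; assumption).
  pose proof (one_add_sqr2_gt0 (u 1%nat) (u 2%nat)) as Hq.
  unfold upd, chart_metric_d, chart_vert_d, chart_horiz_d, kron.
  destruct k as [|[|[|k]]]; try lia; simpl;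
    [rewrite Derive_const | apply is_derive_unique ..];
    destruct i as [|[|[|i]]]; destruct j as [|[|[|j]]]; try lia;
    unfold chart_metric, chart_vert, chart_horiz, cdot; simpl;
    try auto_derive; try (simpl; lra); field; simpl in *; lra.
Qed.

Definition torus_tangent (x y : R) (a : nat) : vec := fun k =>
  match a, k with
  | 0%nat, 0%nat => 1
  | 1%nat, 1%nat => - y
  | 1%nat, 2%nat => x
  | _, _ => 0
  end.

Definition torus_normal (x y : R) : vec := fun k =>
  match k with 1%nat => x | 2%nat => y | _ => 0 end.

Definition torus_metric (L M x y : R) (a b : nat) : R :=
  let r2 := x ^ 2 + y ^ 2 in let q := 1 + r2 in
  match a, b with
  | 0%nat, 0%nat => q * (L * q + M * r2)
  | 1%nat, 1%nat => r2 * (L * r2 + M * q)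
  | _, _ => - q * r2 * (L + M)
  end.

Lemma torus_metric_det L M x y :
  torus_metric L M x y 0 0 * torus_metric L M x y 1 1
  - torus_metric L M x y 0 1 * torus_metric L M x y 1 0
  = L * M * (1 + x ^ 2 + y ^ 2) * (x ^ 2 + y ^ 2).
Proof. unfold torus_metric; ring. Qed.

Lemma gdot_torus_tangent lam mu u a b : (a < 2)%nat -> (b < 2)%nat ->
  gdot lam mu mu u (torus_tangent (u 1%nat) (u 2%nat) a) (torus_tangent (u 1%nat) (u 2%nat) b)
  = torus_metric (lam ^ 2) (mu ^ 2) (u 1%nat) (u 2%nat) a b.
Proof.
  intros Ha Hb; pose proof (one_add_sqr2_gt0 (u 1%nat) (u 2%nat)) as Hq.
  unfold gdot, sum3; rewrite !Gm_chart by lia.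
  unfold torus_metric, torus_tangent, chart_metric, chart_vert, chart_horiz, cdot.
  destruct a as [|[|a]]; destruct b as [|[|b]]; try lia; simpl in *; field; lra.
Qed.

Lemma gdot_torus_tangent_normal lam mu u a :
  gdot lam mu mu u (torus_tangent (u 1%nat) (u 2%nat) a) (torus_normal (u 1%nat) (u 2%nat)) = 0.
Proof.
  pose proof (one_add_sqr2_gt0 (u 1%nat) (u 2%nat)) as Hq.
  unfold gdot, sum3; rewrite !Gm_chart by lia.
  unfold torus_tangent, torus_normal, chart_metric, chart_vert, chart_horiz, cdot.
  destruct a as [|[|a]]; simpl in *; field; lra.
Qed.

Lemma gdot_torus_normal lam mu u :
  gdot lam mu mu u (torus_normal (u 1%nat) (u 2%nat)) (torus_normal (u 1%nat) (u 2%nat))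
  = mu ^ 2 * (u 1%nat ^ 2 + u 2%nat ^ 2) / (1 + (u 1%nat ^ 2 + u 2%nat ^ 2)).
Proof.
  pose proof (one_add_sqr2_gt0 (u 1%nat) (u 2%nat)) as Hq.
  unfold gdot, sum3; rewrite !Gm_chart by lia.
  unfold torus_normal, chart_metric, chart_vert, chart_horiz, cdot; simpl in *; field; lra.
Qed.

Lemma df_torus th s a k :
  df (torus th) a s k = torus_tangent (torus th s 1%nat) (torus th s 2%nat) a k.
Proof.
  unfold df, pd, torus, torus_tangent, upd.
  destruct k as [|[|[|k]]]; destruct a as [|[|a]]; simpl;
  first [ apply Derive_const | apply Derive_id
        | apply is_derive_unique; auto_derive; auto; ring ].
Qed.

Lemma pd_df_torus th s a b k :
  pd (fun s' => df (torus th) b s' k) a s =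
  match a, b with
  | 1%nat, 1%nat => - torus_normal (torus th s 1%nat) (torus th s 2%nat) k
  | _, _ => 0
  end.
Proof.
  unfold pd; rewrite (Derive_ext _ _ _ (fun t => df_torus th (upd s a t) b k)).
  unfold torus, torus_tangent, torus_normal, upd.
  destruct k as [|[|[|k]]]; destruct b as [|[|b]]; destruct a as [|[|a]]; simpl;
  first [ apply Derive_const | apply is_derive_unique; auto_derive; auto; ring ].
Qed.

Lemma torus_radius_sqr th s : torus th s 1%nat ^ 2 + torus th s 2%nat ^ 2 = sinh th ^ 2.
Proof.
  unfold torus; rewrite <- (Rmult_1_r (sinh th ^ 2)), <- (sin2_cos2 (s 1%nat)).
  unfold Rsqr; ring.
Qed.

Lemma torus_radius_sqr_pos th s : sinh th <> 0 -> 0 < torus th s 1%nat ^ 2 + torus th s 2%nat ^ 2.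
Proof. intros Hs; rewrite torus_radius_sqr; apply pow2_gt_0; exact Hs. Qed.

Lemma hI_torus lam mu th s a b : (a < 2)%nat -> (b < 2)%nat ->
  hI lam mu mu (torus th) a b s
  = torus_metric (lam ^ 2) (mu ^ 2) (torus th s 1%nat) (torus th s 2%nat) a b.
Proof.
  intros Ha Hb; unfold hI; rewrite <- gdot_torus_tangent by assumption.
  apply gdot_ext; intros k _; apply df_torus.
Qed.

Definition torus_sff (L M x y : R) (a b : nat) : R :=
  let r2 := x ^ 2 + y ^ 2 in let q := 1 + r2 in
  match a, b with
  | 0%nat, 0%nat => - 2 * L * q * r2 - M * r2 * (r2 + q)
  | 1%nat, 1%nat => - 2 * L * r2 ^ 2 - M * r2 * (r2 + q)
  | _, _ => (L + M) * r2 * (r2 + q)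
  end.

Lemma gdot_Dab_torus lam mu th s a b : 0 < lam -> 0 < mu -> (a < 2)%nat -> (b < 2)%nat ->
  gdot lam mu mu (torus th s) (Dab lam mu mu (torus th) a b s)
    (torus_normal (torus th s 1%nat) (torus th s 2%nat))
  = torus_sff (lam ^ 2) (mu ^ 2) (torus th s 1%nat) (torus th s 2%nat) a b.
Proof.
  intros Hl Hm Ha Hb.
  rewrite gdot_Dab
    by (rewrite det3_Gm; apply Rgt_not_eq, Rmult_lt_0_compat; repeat apply pow_lt; assumption).
  unfold gdot, Gam_first, sum3; rewrite !pd_df_torus, !df_torus, !pd_Gm, !Gm_chart by lia.
  pose proof (one_add_sqr2_gt0 (torus th s 1%nat) (torus th s 2%nat)) as Hq.
  set (x := torus th s 1%nat) in *; set (y := torus th s 2%nat) in *; clearbody x y.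
  unfold torus_sff, torus_tangent, torus_normal, chart_metric, chart_metric_d, chart_vert,
    chart_vert_d, chart_horiz, chart_horiz_d, kron, cdot.
  destruct a as [|[|a]]; destruct b as [|[|b]]; try lia; simpl in *; field; lra.
Qed.

Lemma perp_torus lam mu th s (V : vec) k : 0 < lam -> 0 < mu -> sinh th <> 0 -> (k < 3)%nat ->
  let N := torus_normal (torus th s 1%nat) (torus th s 2%nat) in
  perp lam mu mu (torus th) s V k =
  gdot lam mu mu (torus th s) V N / gdot lam mu mu (torus th s) N N * N k.
Proof.
  intros Hl Hm Hs Hk N.
  pose proof (torus_radius_sqr_pos th s Hs) as Hr.
  pose proof (one_add_sqr2_gt0 (torus th s 1%nat) (torus th s 2%nat)) as Hq.
  apply perp_decomp with (c0 := V 0%nat)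
    (c1 := (V 2%nat * torus th s 1%nat - V 1%nat * torus th s 2%nat)
           / (torus th s 1%nat ^ 2 + torus th s 2%nat ^ 2))
    (beta := (V 1%nat * torus th s 1%nat + V 2%nat * torus th s 2%nat)
             / (torus th s 1%nat ^ 2 + torus th s 2%nat ^ 2)).
  - rewrite !hI_torus, torus_metric_det by lia.
    apply Rgt_not_eq; repeat apply Rmult_lt_0_compat; lra.
  - intros a; unfold N; rewrite <- (gdot_torus_tangent_normal lam mu (torus th s) a).
    apply gdot_ext; intros j _; [apply df_torus | reflexivity].
  - unfold N; rewrite gdot_torus_normal.
    apply Rgt_not_eq, Rdiv_lt_0_compat; [apply Rmult_lt_0_compat; [apply pow_lt|] | ]; lra.
  - intros j Hj; rewrite !df_torus; unfold N, torus_tangent, torus_normal.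
    destruct j as [|[|[|j]]]; try lia; field; lra.
  - exact Hk.
Qed.

Lemma Hvec_torus lam mu th s k : 0 < lam -> 0 < mu -> sinh th <> 0 -> (k < 3)%nat ->
  Hvec lam mu mu (torus th) s k =
  - (1 + 2 * sinh th ^ 2) / (2 * mu ^ 2 * sinh th ^ 2)
  * torus_normal (torus th s 1%nat) (torus th s 2%nat) k.
Proof.
  intros Hl Hm Hs Hk.
  pose proof (torus_radius_sqr_pos th s Hs) as Hr.
  pose proof (one_add_sqr2_gt0 (torus th s 1%nat) (torus th s 2%nat)) as Hq.
  unfold Hvec, sum2, Bsf, inv2; cbv beta iota zeta.
  rewrite !perp_torus, !gdot_Dab_torus, gdot_torus_normal, !hI_torus, torus_metric_det,
    <- (torus_radius_sqr th s) by (assumption || lia).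
  assert (HL : 0 < lam ^ 2) by (apply pow_lt; exact Hl).
  assert (HM : 0 < mu ^ 2) by (apply pow_lt; exact Hm).
  set (x := torus th s 1%nat) in *; set (y := torus th s 2%nat) in *; clearbody x y.
  set (L := lam ^ 2) in *; set (M := mu ^ 2) in *; clearbody L M.
  unfold torus_metric, torus_sff; field; repeat split; lra.
Qed.

Lemma normH_torus_sinh lam mu th s : 0 < lam -> 0 < mu -> sinh th <> 0 ->
  normH lam mu mu (torus th) s =
  sqrt ((1 + 2 * sinh th ^ 2) ^ 2 / (4 * mu ^ 2 * sinh th ^ 2 * (1 + sinh th ^ 2))).
Proof.
  intros Hl Hm Hs; unfold normH.
  set (c := - (1 + 2 * sinh th ^ 2) / (2 * mu ^ 2 * sinh th ^ 2)).
  set (N := torus_normal (torus th s 1%nat) (torus th s 2%nat)).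
  rewrite (gdot_ext _ _ _ _ _ (fun k => c * N k) _ (fun k => c * N k))
    by (intros k Hk; apply Hvec_torus; assumption).
  unfold N; rewrite gdot_scal, gdot_torus_normal, !torus_radius_sqr; unfold c.
  assert (0 < sinh th ^ 2) by (apply pow2_gt_0; exact Hs).
  f_equal; field; repeat split; lra.
Qed.

(* The right-hand side is coth(2 th) / mu. *)
Lemma normH_torus lam mu th s : 0 < lam -> 0 < mu -> 0 < th ->
  normH lam mu mu (torus th) s = (exp (4 * th) + 1) / (exp (4 * th) - 1) / mu.
Proof.
  intros Hl Hm Ht.
  assert (HE4 : exp (4 * th) = exp th ^ 4)
    by (replace (4 * th) with (th + (th + (th + th))) by ring; rewrite !exp_plus; ring).
  assert (Hsh : sinh th = (exp th - / exp th) / 2) by (unfold sinh; rewrite exp_Ropp; reflexivity).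
  assert (HE : 1 < exp th) by (rewrite <- exp_0; apply exp_increasing; exact Ht).
  assert (HEi : / exp th < 1) by (rewrite <- Rinv_1; apply Rinv_lt_contravar; lra).
  rewrite normH_torus_sinh by (try apply Rgt_not_eq; (assumption || rewrite Hsh; lra)).
  rewrite HE4, Hsh; set (E := exp th) in *; clearbody E.
  assert (HE4' : 1 < E ^ 4) by (apply Rlt_pow_R1; [exact HE | lia]).
  rewrite <- (sqrt_pow2 ((E ^ 4 + 1) / (E ^ 4 - 1) / mu)).
  - f_equal; field; repeat split; apply Rgt_not_eq; nra.
  - apply Rlt_le, Rdiv_lt_0_compat; [apply Rdiv_lt_0_compat |]; lra.
Qed.

Lemma exists_coth_double (k : R) : 1 < k ->
  exists t, 0 < t /\ (exp (4 * t) + 1) / (exp (4 * t) - 1) = k.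
Proof.
  intros Hk.
  assert (Hz : 1 < (k + 1) / (k - 1))
    by (apply (Rmult_lt_reg_r (k - 1)); [lra | unfold Rdiv; rewrite Rmult_assoc, Rinv_l; lra]).
  exists (ln ((k + 1) / (k - 1)) / 4); split.
  - apply Rdiv_lt_0_compat; [rewrite <- ln_1; apply ln_increasing; lra | lra].
  - replace (4 * (ln ((k + 1) / (k - 1)) / 4)) with (ln ((k + 1) / (k - 1))) by field.
    rewrite exp_ln by lra; field; lra.
Qed.

Theorem mainTheorem7 :
  forall lam mu nu : R, 0 < lam -> 0 < mu -> 0 < nu -> mu = nu ->
  forall C : R, C > 1 / mu ->
  exists th : R, 0 < th /\
    forall al be : R, normH lam mu nu (torus th) (pt2 al be) = C.
Proof.
  intros lam mu nu Hl Hm _ <- C HC.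
  assert (Hk : 1 < C * mu).
  { apply (Rmult_lt_compat_r mu) in HC; [| exact Hm].
    unfold Rdiv in HC; rewrite Rmult_1_l, Rinv_l in HC; lra. }
  destruct (exists_coth_double (C * mu) Hk) as [th [Hth Hcoth]].
  exists th; split; [exact Hth |]; intros al be.
  rewrite normH_torus, Hcoth by assumption; field; lra.
Qed.
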